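(* Let $p(1),\dots,p(K)\in[0,1]$, let $\mathbb F_i$ be the CDF of $\mathrm{Bern}(p(i))$, and for $\alpha\in\Delta^{K-1}$ write $\mathbb F_\alpha=\sum_i\alpha(i)\mathbb F_i$. Let $h(u)=u(1-u)$. Then: (1) for all $\alpha,\beta\in\Delta^{K-1}$, $U_h(\mathbb F_\alpha)-U_h(\mathbb F_\beta)\le \|\mathbb F_\alpha-\mathbb F_\beta\|_{\mathrm W}$; (2) let $\alpha^\star\in\arg\max_{\alpha\in\Delta^{K-1}}U_h(\mathbb F_\alpha)$ and $\mathbb F^\star=\mathbb F_{\alpha^\star}$. If $\max_i p(i)<\tfrac12$ or $\min_i p(i)>\tfrac12$, then $U_h(\mathbb F^\star)-U_h(\mathbb F_\alpha)\le\|\mathbb F^\star-\mathbb F_\alpha\|_{\mathrm W}$ for all $\alpha\in\Delta^{K-1}$; otherwise (i.e., there exist $i,j$ with $p(i)\le\tfrac12\le p(j)$), $U_h(\mathbb F^\star)-U_h(\mathbb F_\alpha)\le\|\mathbb F^\star-\mathbb F_\alpha\|_{\mathrm W}^2$ for all $\alpha\in\Delta^{K-1}$.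
   Context: For a CDF $Q$ of a nonnegative random variable, $U_h(Q)=\int_0^\infty h(1-Q(x))\,dx$. $\|\cdot\|_{\mathrm W}$ is the 1-Wasserstein distance, $\|G-S\|_{\mathrm W}=\int|G(x)-S(x)|dx$ for CDFs $G,S$. $\Delta^{K-1}$ is the probability simplex in $\mathbb R^K$. *)

From HB Require Import structures.
From mathcomp Require Import all_boot all_order all_algebra.
From mathcomp Require Import all_classical all_reals all_analysis.
Set Implicit Arguments. Unset Strict Implicit. Unset Printing Implicit Defensive.
Import Order.TTheory GRing.Theory Num.Theory.
Local Open Scope classical_set_scope.
Local Open Scope ring_scope.

Definition bern_cdf (R : realType) (q : R) (x : R) : R :=
  if x < 0 then 0 else if x < 1 then 1 - q else 1.

Definition mix_cdf (R : realType) (K : nat) (p : 'I_K -> R) (a : 'I_K -> R)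
  (x : R) : R := \sum_(i < K) a i * bern_cdf (p i) x.

Definition in_simplex (R : realType) (K : nat) (a : 'I_K -> R) : Prop :=
  (forall i, 0 <= a i) /\ \sum_(i < K) a i = 1.

Definition Uh (R : realType) (h : R -> R) (Q : R -> R) : \bar R :=
  (\int[@lebesgue_measure R]_(x in `[0%R, +oo[) (h (1 - Q x))%:E)%E.

Definition Wdist (R : realType) (G S : R -> R) : \bar R :=
  (\int[@lebesgue_measure R]_(x in [set: R]) `|G x - S x|%:E)%E.

Definition hvar (R : realType) (u : R) : R := u * (1 - u).

From HB Require Import structures.
From mathcomp Require Import all_boot all_order all_algebra.
From mathcomp Require Import all_classical all_reals all_analysis.
From mathcomp Require Import ring lra measurable_realfun.
Set Implicit Arguments. Unset Strict Implicit. Unset Printing Implicit Defensive.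
Import Order.TTheory GRing.Theory Num.Theory.
Local Open Scope classical_set_scope.
Local Open Scope ring_scope.

(* A mixture of Bernoulli CDFs with weights in the simplex is itself the CDF
   of a Bernoulli law, whose parameter m is the weighted mean of the p(i).
   Both functionals then become explicit: U_h(F_alpha) = m (1 - m) and
   ||F_alpha - F_beta||_W = |m_alpha - m_beta|.  Part (1) is the fact that
   u (1 - u) is 1-Lipschitz on [0, 1].  For part (2), when some p(i) <= 1/2 <= p(j)
   the mean 1/2 is attained in the simplex, so a maximiser has mean 1/2, and
   1/4 - m (1 - m) = (m - 1/2)^2. *)

Lemma integral_scaled_indic (R : realType) d (T : measurableType d)
    (mu : {measure set T -> \bar R}) (D A : set T) (c : R) (f : T -> R) :
  measurable D -> measurable A -> A `<=` D -> 0 <= c ->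
  {in D, forall x, f x = c * \1_A x} ->
  (\int[mu]_(x in D) (f x)%:E = c%:E * mu A)%E.
Proof.
move=> mD mA AD c0 fE.
rewrite (eq_integral (fun x => c%:E * (\1_A x)%:E))%E; last first.
  by move=> x Dx; rewrite fE.
rewrite ge0_integralZl//; last by apply/measurable_EFinP; exact: measurable_indic.
by rewrite integral_indic// setIidl.
Qed.

Lemma lebesgue_measure_itv01 (R : realType) :
  (@lebesgue_measure R `[0%R, 1%R[ = 1)%E.
Proof. by rewrite lebesgue_measure_itv /= lte01 oppr0 adde0. Qed.

Section BernoulliCdf.
Variable R : realType.
Implicit Types q r : R.

Lemma bern_cdf_compl q x :
  0 <= x -> 1 - bern_cdf q x = q * \1_(`[0, 1[%classic : set R) x.
Proof.
move=> x0; rewrite /bern_cdf indicE mem_setE in_itv /= x0 ltNge x0 /=.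
by case: ifP => _; rewrite ?mulr1 ?mulr0 ?subrr // opprB addrC subrK.
Qed.

Lemma bern_cdf_dist q r x :
  `|bern_cdf q x - bern_cdf r x| = `|q - r| * \1_(`[0, 1[%classic : set R) x.
Proof.
rewrite /bern_cdf indicE mem_setE in_itv /=.
case: (ltrP x 0) => x0 /=; first by rewrite subrr normr0 mulr0.
case: ifP => _; last by rewrite subrr normr0 mulr0.
by rewrite mulr1 -normrN; congr `|_|; ring.
Qed.

Lemma Uh_bern_cdf (h : R -> R) q : h 0 = 0 -> 0 <= h q ->
  Uh h (bern_cdf q) = (h q)%:E.
Proof.
move=> h00 hq0.
rewrite /Uh (@integral_scaled_indic _ _ _ lebesgue_measure _ `[0, 1[%classic (h q)) //.
- by rewrite [X in (_ * X)%E]lebesgue_measure_itv01 mule1.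
- by move=> x /=; rewrite !in_itv /= => /andP[-> _].
move=> x; rewrite inE /= in_itv /= andbT => x0.
by rewrite bern_cdf_compl // indicE; case: (x \in _); rewrite ?mulr1 ?mulr0.
Qed.

Lemma Wdist_bern_cdf q r : Wdist (bern_cdf q) (bern_cdf r) = `|q - r|%:E.
Proof.
rewrite /Wdist (@integral_scaled_indic _ _ _ lebesgue_measure _ `[0, 1[%classic `|q - r|) //.
- by rewrite [X in (_ * X)%E]lebesgue_measure_itv01 mule1.
by move=> x _; rewrite bern_cdf_dist.
Qed.

End BernoulliCdf.

Lemma convex_combination_reach (R : realFieldType) (x y c : R) : x <= c -> c <= y ->
  exists2 t, 0 <= t <= 1 & t * x + (1 - t) * y = c.
Proof.
move=> xc cy; have [xy|xy] := eqVneq x y.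
  by exists 0; rewrite ?lexx ?ler01 // mul0r add0r subr0 mul1r; lra.
have d0 : 0 < y - x by rewrite subr_gt0 lt_neqAle xy /=; lra.
exists ((y - c) / (y - x)).
  by rewrite divr_ge0 ?ler_pdivrMr ?mul1r /=; lra.
by field; rewrite gt_eqF.
Qed.

Section Hvar.
Variable R : realType.
Implicit Types u v : R.

Lemma hvar_ge0 u : 0 <= u <= 1 -> 0 <= hvar u.
Proof. by move=> /andP[u0 u1]; rewrite /hvar mulr_ge0 // subr_ge0. Qed.

Lemma hvar_lipschitz u v : 0 <= u <= 1 -> 0 <= v <= 1 ->
  hvar u - hvar v <= `|u - v|.
Proof.
move=> /andP[u0 u1] /andP[v0 v1].
have -> : hvar u - hvar v = (u - v) * (1 - u - v) by rewrite /hvar; ring.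
apply: le_trans (ler_norm _) _; rewrite normrM -[X in _ <= X]mulr1.
by rewrite ler_wpM2l // ler_norml; apply/andP; split; lra.
Qed.

Lemma hvar_half_sub u : hvar (1 / 2) - hvar u = (u - 1 / 2) ^+ 2.
Proof. by rewrite /hvar; field. Qed.

Lemma hvar_max_eq_half u : hvar (1 / 2) <= hvar u -> u = 1 / 2.
Proof.
rewrite -subr_le0 hvar_half_sub => sq_le0.
have /eqP : (u - 1 / 2) ^+ 2 = 0 by apply/le_anti; rewrite sq_le0 sqr_ge0.
by rewrite expf_eq0 /= subr_eq0 => /eqP.
Qed.

End Hvar.

Section BernoulliMixture.
Variables (R : realType) (K : nat) (p : 'I_K -> R).
Implicit Types a b : 'I_K -> R.

Definition mix_mean a := \sum_(i < K) a i * p i.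

Definition simplex_vertex (i : 'I_K) : 'I_K -> R := fun k => (k == i)%:R.

Lemma mix_cdf_bern_cdf a :
  \sum_(i < K) a i = 1 -> mix_cdf p a = bern_cdf (mix_mean a).
Proof.
move=> sa; apply/funext => x; rewrite /mix_cdf /bern_cdf /mix_mean.
case: ifP => _; first by rewrite big1 // => i _; rewrite mulr0.
case: ifP => _; last by under eq_bigr do rewrite mulr1.
by under eq_bigr do rewrite mulrBr mulr1; rewrite sumrB sa.
Qed.

Lemma mix_mean_vertex i : mix_mean (simplex_vertex i) = p i.
Proof.
rewrite /mix_mean /simplex_vertex (bigD1 i) //= eqxx mul1r big1 ?addr0 //.
by move=> k /negbTE ->; rewrite mul0r.
Qed.

Lemma mix_mean_convex a b t :
  mix_mean (fun k => t * a k + (1 - t) * b k) = t * mix_mean a + (1 - t) * mix_mean b.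
Proof.
rewrite /mix_mean !mulr_sumr -big_split /=.
by apply: eq_bigr => k _; ring.
Qed.

Lemma in_simplex_vertex i : in_simplex (simplex_vertex i).
Proof.
split=> [k|]; first exact: ler0n.
by rewrite /simplex_vertex (bigD1 i) //= eqxx big1 ?addr0 // => k /negbTE ->.
Qed.

Lemma in_simplex_convex a b t : 0 <= t <= 1 -> in_simplex a -> in_simplex b ->
  in_simplex (fun k => t * a k + (1 - t) * b k).
Proof.
move=> /andP[t0 t1] [a0 sa] [b0 sb]; split=> [k|].
  by rewrite addr_ge0 // mulr_ge0 // subr_ge0.
by rewrite big_split /= -!mulr_sumr sa sb !mulr1 addrC subrK.
Qed.

Hypothesis p01 : forall i, 0 <= p i <= 1.

Lemma mix_mean_in01 a : in_simplex a -> 0 <= mix_mean a <= 1.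
Proof.
move=> [a0 sa]; apply/andP; split.
  by apply: sumr_ge0 => i _; rewrite mulr_ge0 //; case/andP: (p01 i).
by rewrite -sa; apply: ler_sum => i _; rewrite ler_piMr //; case/andP: (p01 i).
Qed.

Lemma Uh_mix_cdf a : in_simplex a -> Uh (@hvar R) (mix_cdf p a) = (hvar (mix_mean a))%:E.
Proof.
move=> sa; rewrite mix_cdf_bern_cdf; last by case: sa.
by rewrite Uh_bern_cdf ?hvar_ge0 ?mix_mean_in01 // /hvar mul0r.
Qed.

Lemma Wdist_mix_cdf a b : in_simplex a -> in_simplex b ->
  Wdist (mix_cdf p a) (mix_cdf p b) = `|mix_mean a - mix_mean b|%:E.
Proof.
move=> [_ sa] [_ sb].
by rewrite !mix_cdf_bern_cdf // Wdist_bern_cdf.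
Qed.

Lemma Uh_mix_cdf_lipschitz a b : in_simplex a -> in_simplex b ->
  (Uh (@hvar R) (mix_cdf p a) - Uh (@hvar R) (mix_cdf p b)
     <= Wdist (mix_cdf p a) (mix_cdf p b))%E.
Proof.
move=> sa sb; rewrite !Uh_mix_cdf // Wdist_mix_cdf // -EFinB lee_fin.
by rewrite hvar_lipschitz ?mix_mean_in01.
Qed.

Lemma mix_mean_half_attained i j : p i <= 1 / 2 -> 1 / 2 <= p j ->
  exists2 a, in_simplex a & mix_mean a = 1 / 2.
Proof.
move=> pi_le pj_ge; have [t t01 ht] := convex_combination_reach pi_le pj_ge.
exists (fun k => t * simplex_vertex i k + (1 - t) * simplex_vertex j k).
  exact/in_simplex_convex/in_simplex_vertex/in_simplex_vertex.
by rewrite mix_mean_convex !mix_mean_vertex.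
Qed.

Lemma Uh_argmax_mix_mean astar i j : in_simplex astar ->
  (forall a, in_simplex a ->
     (Uh (@hvar R) (mix_cdf p a) <= Uh (@hvar R) (mix_cdf p astar))%E) ->
  p i <= 1 / 2 -> 1 / 2 <= p j -> mix_mean astar = 1 / 2.
Proof.
move=> sstar smax pi_le pj_ge.
have [a sa ma] := mix_mean_half_attained pi_le pj_ge.
apply: hvar_max_eq_half; rewrite -ma -lee_fin -!Uh_mix_cdf //.
exact: smax.
Qed.

Lemma Uh_mix_cdf_argmax_quadratic astar a : in_simplex astar -> in_simplex a ->
  mix_mean astar = 1 / 2 ->
  (Uh (@hvar R) (mix_cdf p astar) - Uh (@hvar R) (mix_cdf p a)
     <= Wdist (mix_cdf p astar) (mix_cdf p a) * Wdist (mix_cdf p astar) (mix_cdf p a))%E.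
Proof.
move=> sstar sa mstar; rewrite !Uh_mix_cdf // Wdist_mix_cdf // -EFinB -EFinM lee_fin.
by rewrite mstar hvar_half_sub -normrM -expr2 normrX real_normK ?num_real // -sqrrN opprB.
Qed.

End BernoulliMixture.

Theorem mainTheorem4 (R : realType) (K : nat) (p : 'I_K -> R)
  (hp : forall i, 0 <= p i <= 1) :
  (forall a b : 'I_K -> R, in_simplex a -> in_simplex b ->
     (Uh (@hvar R) (mix_cdf p a) - Uh (@hvar R) (mix_cdf p b)
        <= Wdist (mix_cdf p a) (mix_cdf p b))%E)
  /\
  (forall astar : 'I_K -> R, in_simplex astar ->
     (forall a, in_simplex a ->
        (Uh (@hvar R) (mix_cdf p a) <= Uh (@hvar R) (mix_cdf p astar))%E) ->
     (((forall i, p i < 1 / 2) \/ (forall i, 1 / 2 < p i)) ->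
        forall a, in_simplex a ->
          (Uh (@hvar R) (mix_cdf p astar) - Uh (@hvar R) (mix_cdf p a)
             <= Wdist (mix_cdf p astar) (mix_cdf p a))%E)
     /\
     ((exists i j, p i <= 1 / 2 /\ 1 / 2 <= p j) ->
        forall a, in_simplex a ->
          (Uh (@hvar R) (mix_cdf p astar) - Uh (@hvar R) (mix_cdf p a)
             <= Wdist (mix_cdf p astar) (mix_cdf p a)
                * Wdist (mix_cdf p astar) (mix_cdf p a))%E)).
Proof.
split=> [a b|astar sstar smax]; first exact: Uh_mix_cdf_lipschitz.
split=> [_ a sa|[i [j [pi_le pj_ge]]] a sa]; first exact: Uh_mix_cdf_lipschitz.
apply: Uh_mix_cdf_argmax_quadratic => //.
exact: Uh_argmax_mix_mean smax pi_le pj_ge.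
Qed.
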